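(* Fix a single slot. Let $\beta\in(0,1]$, let $K\ge 1$, and let $J_{\max}=\min(K,\lfloor 1/\beta\rfloor)$. Let $X_1,\dots,X_K$ be i.i.d. nonnegative random variables with $\mathbb{E}X_1=1$, let $r_1,\dots,r_K\ge 0$ and $T_1,\dots,T_K>0$ be constants, and set $s_k=r_kX_k/T_k$, $\bar s_k=\mathbb{E}s_k=r_k/T_k$. Let $(k_1,\dots,k_K)$ be a permutation of $\{1,\dots,K\}$ with $\bar s_{k_1}\ge \bar s_{k_2}\ge\dots\ge\bar s_{k_K}$ (the probing order). For $j\ge 1$ define the reward $y_j=(1-j\beta)\,w_j$ with $w_j=\max(s_{k_1},\dots,s_{k_j})$, and $w_0=0$, $y_0=0$. For $j$ with $j+1\le K$ define the event $$\mathcal{E}_j=\Big\{\,y_j \ \ge\ \mathbb{E}\big[y_{j+1}\,\big|\,s_{k_1},\dots,s_{k_j}\big]\Big\}=\Big\{(1-j\beta)w_j\ \ge\ (1-(j+1)\beta)\,\phi_{j+1}(w_j)\Big\},$$ where $\phi_{i}(w)=\mathbb{E}[\max(w,s_{k_i})]$ for deterministic $w\ge 0$. Then for every $j\ge 0$ with $j+2\le K$ and $(j+1)\beta\le 1$ (in particular for $0\le j\le J_{\max}-2$ whenever $J_{\max}<K$ or $j+2\le K$), one has $\mathcal{E}_j\subseteq\mathcal{E}_{j+1}$; i.e., the sequential probing-and-scheduling stopping problem with rewards $y_j$ is a monotone stopping problem.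
   Context: This models one time slot of a downlink with $K$ users, where probing the channel of one user consumes a fraction $\beta$ of the slot; after probing $j$ users (in the order $k_1,k_2,\dots$) and stopping, the scheduler transmits to the best probed user and earns $(1-j\beta)$ times its throughput-normalized rate. A stopping problem is called monotone if the events $\mathcal{E}_j$ (''stopping now is at least as good as continuing exactly one more stage and then stopping'') are nested increasing, $\mathcal{E}_j\subseteq\mathcal{E}_{j+1}$. *)

From Stdlib Require Import Reals Lra Lia.
Open Scope R_scope.

(* The common law of the i.i.d. nonnegative X_k with E X_1 = 1, presented  *)
(* as its expectation functional  f |-> E[f(X_1)]  on the class of         *)
(* continuous functions of at most linear growth on [0,oo) (all of these   *)
(* are integrable since E X_1 = 1).  Every probability law on [0,oo) with  *)
(* mean 1 induces such a functional (by Lebesgue integration).             *)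
Definition lin_growth (f : R -> R) : Prop :=
  exists a b : R, forall x, 0 <= x -> Rabs (f x) <= a + b * x.

Definition admissible (f : R -> R) : Prop :=
  (forall x, continuity_pt f x) /\ lin_growth f.

Record law_mean1 := {
  Lexp : (R -> R) -> R;
  Lexp_mono : forall f g, admissible f -> admissible g ->
      (forall x, 0 <= x -> f x <= g x) -> Lexp f <= Lexp g;
  Lexp_lin : forall f g a b, admissible f -> admissible g ->
      Lexp (fun x => a * f x + b * g x) = a * Lexp f + b * Lexp g;
  Lexp_one : Lexp (fun _ => 1) = 1;
  Lexp_mean : Lexp (fun x => x) = 1 }.

(* Users are numbered 1..K; k : nat -> nat is the probing order k_1..k_K. *)
Definition is_perm (K : nat) (k : nat -> nat) : Prop :=
  (forall i, (1 <= i <= K)%nat -> (1 <= k i <= K)%nat) /\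
  (forall i i', (1 <= i <= K)%nat -> (1 <= i' <= K)%nat -> k i = k i' -> i = i').

Definition s_val (r T x : nat -> R) (u : nat) : R := r u * x u / T u.

Definition sbar (r T : nat -> R) (u : nat) : R := r u / T u.

Fixpoint w_val (r T x : nat -> R) (k : nat -> nat) (j : nat) : R :=
  match j with
  | O => 0
  | S j' => Rmax (w_val r T x k j') (s_val r T x (k (S j')))
  end.

Definition y_val (beta : R) (r T x : nat -> R) (k : nat -> nat) (j : nat) : R :=
  (1 - INR j * beta) * w_val r T x k j.

Definition phi (L : law_mean1) (r T : nat -> R) (k : nat -> nat) (i : nat) (w : R) : R :=
  Lexp L (fun z => Rmax w (r (k i) / T (k i) * z)).

Definition event_E (L : law_mean1) (beta : R) (r T x : nat -> R) (k : nat -> nat)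
    (j : nat) : Prop :=
  y_val beta r T x k j >= (1 - INR (S j) * beta) * phi L r T k (S j) (w_val r T x k j).

(* Write [c = 1 - (j+1) beta >= 0], [w = w_j <= w' = w_(j+1)], and
   [phi_c(v) = E[max(v, c X)]].  Three facts about [phi] drive the proof:
   [phi_c(v) >= v]; [phi_c] grows with the slope [c], so the probing order gives
   [phi_(j+2) <= phi_(j+1)]; and the excess [phi_c(v) - v = E[max(0, c X - v)]]
   shrinks as [v] grows.  If [c <= beta] the second-stage weight [1 - (j+2) beta]
   is nonpositive and [E_(j+1)] is immediate.  Otherwise
   [(c - beta) phi_(j+2)(w') <= (c - beta) w' + c (phi_(j+1)(w) - w)], and
   [E_j] says exactly [c (phi_(j+1)(w) - w) <= beta w <= beta w']. *)

From Stdlib Require Import Reals Lra Lia Psatz FunctionalExtensionality.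
Open Scope R_scope.

Lemma Rmax_abs_formula (u v : R) : Rmax u v = (u + v + Rabs (u - v)) / 2.
Proof.
  unfold Rmax, Rabs.
  destruct (Rle_dec u v), (Rcase_abs (u - v)); lra.
Qed.

Lemma admissible_const (v : R) : admissible (fun _ => v).
Proof.
  split.
  - intro x; apply continuity_pt_const; intros u u'; reflexivity.
  - exists (Rabs v), 0; intros x _; lra.
Qed.

Lemma admissible_lincomb (f g : R -> R) (a b : R) :
  admissible f -> admissible g -> admissible (fun x => a * f x + b * g x).
Proof.
  intros [Cf [af [bf Hf]]] [Cg [ag [bg Hg]]]; split.
  - intro x; apply continuity_pt_plus; apply continuity_pt_scal; auto.
  - exists (Rabs a * af + Rabs b * ag), (Rabs a * bf + Rabs b * bg).
    intros x Hx; specialize (Hf x Hx); specialize (Hg x Hx).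
    eapply Rle_trans; [apply Rabs_triang |].
    rewrite !Rabs_mult.
    pose proof (Rabs_pos a); pose proof (Rabs_pos b); nra.
Qed.

Lemma admissible_max_linear (v c : R) : admissible (fun z => Rmax v (c * z)).
Proof.
  split.
  - intro x.
    replace (fun z => Rmax v (c * z))
      with (fun z => (v + c * z + Rabs (v - c * z)) / 2)
      by (apply functional_extensionality; intro z; now rewrite Rmax_abs_formula).
    reg.
  - exists (Rabs v), (Rabs c); intros x Hx.
    unfold Rmax; destruct (Rle_dec v (c * x)).
    + rewrite Rabs_mult, (Rabs_pos_eq x Hx); pose proof (Rabs_pos v); nra.
    + pose proof (Rabs_pos c); nra.
Qed.

Section ExpectedMax.

Variable L : law_mean1.

Definition Emax (c v : R) : R := Lexp L (fun z => Rmax v (c * z)).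

Lemma Lexp_const (v : R) : Lexp L (fun _ => v) = v.
Proof.
  transitivity (Lexp L (fun _ => v * 1 + 0 * 1)).
  - f_equal; apply functional_extensionality; intro; ring.
  - rewrite Lexp_lin by apply admissible_const; rewrite Lexp_one; ring.
Qed.

Lemma Emax_ge (c v : R) : v <= Emax c v.
Proof.
  rewrite <- (Lexp_const v) at 1.
  apply Lexp_mono; [apply admissible_const | apply admissible_max_linear |].
  intros; apply Rmax_l.
Qed.

Lemma Emax_le_slope (b a v : R) : b <= a -> Emax b v <= Emax a v.
Proof.
  intro Hba.
  apply Lexp_mono; try apply admissible_max_linear.
  intros z Hz; apply Rle_max_compat_l; nra.
Qed.

Lemma Emax_sub_antitone (c v v' : R) : v <= v' -> Emax c v' - v' <= Emax c v - v.
Proof.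
  intro Hv.
  assert (Hexcess : forall u, Emax c u - u
                    = Lexp L (fun z => 1 * Rmax u (c * z) + (- u) * 1)).
  { intro u; unfold Emax.
    rewrite Lexp_lin by (apply admissible_max_linear || apply admissible_const).
    rewrite Lexp_one; ring. }
  rewrite !Hexcess.
  apply Lexp_mono;
    try (apply admissible_lincomb; [apply admissible_max_linear | apply admissible_const]).
  intros z _; unfold Rmax.
  destruct (Rle_dec v' (c * z)), (Rle_dec v (c * z)); lra.
Qed.

End ExpectedMax.

Lemma w_val_le_succ r T x k j : w_val r T x k j <= w_val r T x k (S j).
Proof. apply Rmax_l. Qed.

(* The real-number core of the step [E_j -> E_(j+1)]: [pa = phi_(j+1)(w)],
   [pa' = phi_(j+1)(w')], [pb' = phi_(j+2)(w')]. *)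
Lemma one_step_lookahead_monotone (c beta w w' pa pa' pb' : R) :
  0 <= c -> 0 <= beta -> w <= w' ->
  w' <= pb' -> pb' <= pa' -> pa' - w' <= pa - w ->
  c * pa <= (c + beta) * w ->
  (c - beta) * pb' <= c * w'.
Proof.
  intros Hc Hb Hw Hpb Hba Hexc HE.
  destruct (Rle_lt_dec 0 (c - beta)) as [Hpos | Hneg].
  - assert ((c - beta) * pb' <= (c - beta) * pa') by (apply Rmult_le_compat_l; lra).
    assert ((c - beta) * (pa' - w') <= c * (pa - w)) by nra.
    nra.
  - assert ((c - beta) * pb' <= (c - beta) * w') by (apply Rmult_le_compat_neg_l; lra).
    nra.
Qed.

Theorem theorem1 :
  forall (beta : R) (K : nat) (L : law_mean1) (r T : nat -> R) (k : nat -> nat),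
    0 < beta <= 1 ->
    (1 <= K)%nat ->
    (forall u, (1 <= u <= K)%nat -> 0 <= r u) ->
    (forall u, (1 <= u <= K)%nat -> 0 < T u) ->
    is_perm K k ->
    (forall i, (1 <= i)%nat -> (i < K)%nat -> sbar r T (k (S i)) <= sbar r T (k i)) ->
    forall j : nat, (j + 2 <= K)%nat -> INR (S j) * beta <= 1 ->
    (* event inclusion E_j ⊆ E_{j+1}: for every outcome, i.e. every
       realization x of the nonnegative X_1..X_K *)
    forall x : nat -> R, (forall u, (1 <= u <= K)%nat -> 0 <= x u) ->
      event_E L beta r T x k j -> event_E L beta r T x k (S j).
Proof.
  intros beta K L r T k Hbeta _ _ _ _ Hsorted j Hj Hjbeta x _ HE.
  unfold event_E, y_val in *.
  change (phi L r T k ?i ?v) with (Emax L (sbar r T (k i)) v) in *.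
  assert (Hslope : sbar r T (k (S (S j))) <= sbar r T (k (S j)))
    by (apply Hsorted; lia).
  pose proof (w_val_le_succ r T x k j) as Hw.
  set (a := sbar r T (k (S j))) in *.
  set (b := sbar r T (k (S (S j)))) in *.
  set (w := w_val r T x k j) in *.
  set (w' := w_val r T x k (S j)) in *.
  rewrite !S_INR in *.
  apply Rle_ge; apply Rge_le in HE.
  replace (1 - (INR j + 1 + 1) * beta) with ((1 - (INR j + 1) * beta) - beta) by ring.
  replace (1 - INR j * beta) with ((1 - (INR j + 1) * beta) + beta) in HE by ring.
  apply one_step_lookahead_monotone with (w := w) (pa := Emax L a w)
    (pa' := Emax L a w'); try lra.
  - apply Emax_ge.
  - now apply Emax_le_slope.
  - now apply Emax_sub_antitone.
Qed.
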